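(* Let $\phi$ be a propositional CNF formula and run Algorithm 1 (described in the context) on $\phi$ with an arbitrary decomposition $\psi_1,\dots,\psi_k$. If the algorithm returns $\top$, then $\phi$ is satisfiable; if it returns $\bot$, then $\phi$ is unsatisfiable.
   Context: A formula in CNF is a conjunction of clauses (disjunctions of literals); $V_\chi$ denotes the set of variables of $\chi$. Given formulas $A,B$ with $A\wedge B$ unsatisfiable, an interpolant for $\neg(A\wedge B)$ is a formula $I$ with $A\Rightarrow I$, $I\Rightarrow\neg B$, and $V_I\subseteq V_A\cap V_B$. Algorithm 1: decompose $\phi$ into formulas $\psi_1,\dots,\psi_k$, each being a conjunction of clauses of $\phi$, with $\phi\equiv\psi_1\wedge\dots\wedge\psi_k$ (no requirement that they share no variables). Let $V=\bigcup_{i\neq j}(V_{\psi_i}\cap V_{\psi_j})$ be the shared variables. Set $G:=\top$ and repeat: if $G$ is unsatisfiable, return $\bot$; otherwise pick an assignment $m$ to all variables of $V$ satisfying $G$ (viewed as a conjunction of literals). For each $i=1,\dots,k$: if $\psi_i\wedge m$ is unsatisfiable, compute an interpolant $I$ for $\neg(\psi_i\wedge m)$ (so its variables lie in $V_{\psi_i}\cap V$) and set $G:=G\wedge I$. If no $\psi_i\wedge m$ was unsatisfiable in this round, return $\top$; otherwise repeat. *)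

From mathcomp Require Import all_boot.
Set Implicit Arguments. Unset Strict Implicit. Unset Printing Implicit Defensive.

(* General propositional formulas (interpolants need not be CNF). *)
Inductive form : Type :=
| FTop : form
| FBot : form
| FVar : nat -> form
| FNeg : form -> form
| FAnd : form -> form -> form
| FOr  : form -> form -> form.

Fixpoint eval (a : nat -> bool) (f : form) : bool :=
  match f with
  | FTop => true
  | FBot => false
  | FVar x => a x
  | FNeg g => ~~ eval a g
  | FAnd g h => eval a g && eval a h
  | FOr g h => eval a g || eval a h
  end.

Fixpoint vars (f : form) : seq nat :=
  match f with
  | FTop | FBot => [::]
  | FVar x => [:: x]
  | FNeg g => vars g
  | FAnd g h | FOr g h => vars g ++ vars h
  end.

Definition satisfiable (f : form) : Prop := exists a : nat -> bool, eval a f.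

(* CNF: a literal is (variable, polarity), a clause is a disjunction of
   literals, a CNF is a conjunction of clauses. *)
Definition literal := (nat * bool)%type.
Definition clause := seq literal.
Definition cnf := seq clause.

Definition lit_form (l : literal) : form :=
  if l.2 then FVar l.1 else FNeg (FVar l.1).
Definition clause_form (c : clause) : form := foldr (fun l acc => FOr (lit_form l) acc) FBot c.
Definition cnf_form (p : cnf) : form := foldr (fun c acc => FAnd (clause_form c) acc) FTop p.
Definition cnf_vars (p : cnf) : seq nat := vars (cnf_form p).

Definition big_and (fs : seq form) : form := foldr FAnd FTop fs.

Definition decomposition (phi : cnf) (psis : seq cnf) : Prop :=
  (forall psi, psi \in psis -> forall c, c \in psi -> c \in phi) /\
  (forall a, eval a (cnf_form phi) = eval a (big_and (map cnf_form psis))).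

(* Shared variables V = U_{i<>j} (V_{psi_i} cap V_{psi_j}). *)
Definition shared_vars (psis : seq cnf) : seq nat :=
  let k := size psis in
  undup [seq x <- flatten (map cnf_vars psis) |
          has (fun i => has (fun j => [&& i != j,
                 x \in cnf_vars (nth [::] psis i) & x \in cnf_vars (nth [::] psis j)])
               (iota 0 k)) (iota 0 k)].

Definition assign_form (V : seq nat) (m : nat -> bool) : form :=
  big_and [seq lit_form (x, m x) | x <- V].

Definition interpolant (A B I : form) : Prop :=
  (forall a, eval a A -> eval a I) /\
  (forall a, eval a I -> ~~ eval a B) /\
  {subset vars I <= vars A} /\ {subset vars I <= vars B}.

(* One round of the inner loop of Algorithm 1, for a fixed assignment m:
   [round V m psis G G' b] means: processing psis in order starting from G ends
   with G', and b records whether some psi_i /\ m was unsatisfiable. *)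
Inductive round (V : seq nat) (m : nat -> bool) : seq cnf -> form -> form -> bool -> Prop :=
| round_nil : forall G, round V m [::] G G false
| round_sat : forall psi rest G G' b,
    satisfiable (FAnd (cnf_form psi) (assign_form V m)) ->
    round V m rest G G' b -> round V m (psi :: rest) G G' b
| round_unsat : forall psi rest G G' b I,
    ~ satisfiable (FAnd (cnf_form psi) (assign_form V m)) ->
    interpolant (cnf_form psi) (assign_form V m) I ->
    round V m rest (FAnd G I) G' b -> round V m (psi :: rest) G G' true.

(* [run psis G r]: a (terminating) execution of the main loop of Algorithm 1
   from the current value G returns r (true = top, false = bottom).
   The choices of m and of the interpolants are arbitrary (nondeterministic). *)
Inductive run (psis : seq cnf) : form -> bool -> Prop :=
| run_bot : forall G, ~ satisfiable G -> run psis G false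
| run_top : forall G m G',
    eval m G ->
    round (shared_vars psis) m psis G G' false -> run psis G true
| run_loop : forall G m G' r,
    eval m G ->
    round (shared_vars psis) m psis G G' true ->
    run psis G' r -> run psis G r.

(* Write V for the shared variables of the decomposition psi_1 .. psi_k of phi.
   - Answer bottom: every interpolant I added to G is implied by the component
     psi_i it was computed from, so any model of all the psi_i that satisfies
     G still satisfies G after a round ([round_preserves_models]).  Starting
     from G = top, a model of phi would therefore satisfy the final,
     unsatisfiable G ([run_bot_no_model]).
   - Answer top: in the last round every psi_i /\ m is satisfiable
     ([round_all_satisfiable]).  Local models that agree with m on V can be
     glued into one global model: a variable outside V occurs in at most one
     component ([unshared_owner_unique]), so it can take its value from that
     component's model ([glue_models]).
   The theorem follows since phi is equivalent to the conjunction of the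
   psi_i ([decomposition_eval]). *)
From mathcomp Require Import all_boot.
Set Implicit Arguments. Unset Strict Implicit. Unset Printing Implicit Defensive.

Lemma eval_ext (a b : nat -> bool) (f : form) :
  {in vars f, a =1 b} -> eval a f = eval b f.
Proof.
elim: f => //= [x|g IHg|g IHg h IHh|g IHg h IHh] eq_ab.
- by apply: eq_ab; rewrite inE.
- by rewrite IHg.
- by rewrite IHg ?IHh // => x x_in; apply: eq_ab; rewrite mem_cat x_in ?orbT.
- by rewrite IHg ?IHh // => x x_in; apply: eq_ab; rewrite mem_cat x_in ?orbT.
Qed.

Lemma eval_big_and (a : nat -> bool) (fs : seq form) :
  eval a (big_and fs) = all (eval a) fs.
Proof. by elim: fs => //= f fs ->. Qed.

Lemma eval_assign_form (a m : nat -> bool) (V : seq nat) :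
  eval a (assign_form V m) -> {in V, a =1 m}.
Proof.
rewrite /assign_form eval_big_and all_map => /allP a_cube x x_in.
by move: (a_cube x x_in); rewrite /= /lit_form; case: (m x) => /=; case: (a x).
Qed.

Lemma decomposition_eval (phi : cnf) (psis : seq cnf) (a : nat -> bool) :
  decomposition phi psis ->
  eval a (cnf_form phi) = all (fun psi => eval a (cnf_form psi)) psis.
Proof. by move=> [_ ->]; rewrite eval_big_and all_map. Qed.

Lemma finite_choice (T : Type) (P : nat -> T -> Prop) (k : nat) (t0 : T) :
  (forall i, i < k -> exists t, P i t) ->
  exists f : nat -> T, forall i, i < k -> P i (f i).
Proof.
elim: k => [_|k IHk exP]; first by exists (fun=> t0).
have [f Pf] : exists f : nat -> T, forall i, i < k -> P i (f i).
  by apply: IHk => i lt_ik; apply: exP; rewrite ltnS ltnW.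
have [t Pt] := exP k (ltnSn k).
exists (fun i => if i == k then t else f i) => i; rewrite ltnS leq_eqVlt.
by case: eqP => [-> //| _ /= lt_ik]; apply: Pf.
Qed.

Section Gluing.
Variable psis : seq cnf.

Let k := size psis.
Let V := shared_vars psis.
Let cv (i : nat) : seq nat := cnf_vars (nth [::] psis i).

Lemma unshared_owner_unique (x i j : nat) :
  i < k -> j < k -> x \in cv i -> x \in cv j -> x \notin V -> i = j.
Proof.
move=> lt_ik lt_jk x_i x_j; apply: contraNeq => neq_ij.
rewrite mem_undup mem_filter; apply/andP; split.
  apply/hasP; exists i; first by rewrite mem_iota.
  by apply/hasP; exists j; rewrite ?mem_iota // neq_ij x_i x_j.
apply/flattenP; exists (cv i) => //; apply/mapP; exists (nth [::] psis i) => //.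
exact: mem_nth.
Qed.

Lemma glue_models (m : nat -> bool) :
  (forall psi, psi \in psis ->
     satisfiable (FAnd (cnf_form psi) (assign_form V m))) ->
  exists a, forall psi, psi \in psis -> eval a (cnf_form psi).
Proof.
move=> local_sat.
have [loc loc_model] : exists loc : nat -> nat -> bool, forall i, i < k ->
    eval (loc i) (FAnd (cnf_form (nth [::] psis i)) (assign_form V m)).
  apply: (@finite_choice _ (fun i a =>
    eval a (FAnd (cnf_form (nth [::] psis i)) (assign_form V m))) k (fun=> true)).
  by move=> i lt_ik; apply/local_sat/mem_nth.
pose owner x := find (fun j => x \in cv j) (iota 0 k).
exists (fun x => if x \in V then m x else loc (owner x) x) => psi psi_in.
have lt_ik : index psi psis < k by rewrite index_mem.
have nth_i : nth [::] psis (index psi psis) = psi by rewrite nth_index.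
move: (loc_model _ lt_ik); rewrite nth_i /= => /andP [loc_psi loc_cube].
rewrite (eval_ext (b := loc (index psi psis))) // => x x_in.
case: ifPn => [x_V|x_notV]; first by rewrite (eval_assign_form loc_cube).
have x_i : x \in cv (index psi psis) by rewrite /cv nth_i.
have has_owner : has (fun j => x \in cv j) (iota 0 k).
  by apply/hasP; exists (index psi psis); rewrite ?mem_iota.
have lt_ok : owner x < k by move: has_owner; rewrite has_find size_iota.
have x_o : x \in cv (owner x) by move: (nth_find 0 has_owner); rewrite nth_iota.
by rewrite (unshared_owner_unique lt_ok lt_ik x_o x_i x_notV).
Qed.

End Gluing.

Lemma round_all_satisfiable (V : seq nat) (m : nat -> bool) (ps : seq cnf)
    (G G' : form) (b : bool) :
  round V m ps G G' b -> b = false ->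
  forall psi, psi \in ps -> satisfiable (FAnd (cnf_form psi) (assign_form V m)).
Proof.
elim=> //= psi rest G0 G1 b0 psi_sat _ IH b0_false q.
by rewrite inE => /orP [/eqP -> //| q_in]; apply: IH.
Qed.

(* Interpolants are implied by their components, so a round keeps every
   common model of the components that satisfies G. *)
Lemma round_preserves_models (V : seq nat) (m : nat -> bool) (ps : seq cnf)
    (G G' : form) (b : bool) (a : nat -> bool) :
  round V m ps G G' b ->
  (forall psi, psi \in ps -> eval a (cnf_form psi)) -> eval a G -> eval a G'.
Proof.
elim=> [G0 _ // | psi rest G0 G1 b0 _ _ IH | psi rest G0 G1 b0 I _ [psi_I _] _ IH]
    a_ps a_G; apply: IH => [q q_in | ]; try by apply: a_ps; rewrite inE q_in orbT.
- exact: a_G.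
- by rewrite /= a_G psi_I // a_ps // inE eqxx.
Qed.

Lemma run_bot_no_model (psis : seq cnf) (G : form) (r : bool) (a : nat -> bool) :
  run psis G r -> r = false ->
  (forall psi, psi \in psis -> eval a (cnf_form psi)) -> ~~ eval a G.
Proof.
move=> run_G r_false a_ps; elim: run_G r_false => [G0 G0_unsat _|//|].
- by apply/negP => a_G0; apply: G0_unsat; exists a.
- move=> G0 m G1 r0 _ round_G0 _ IH r0_false.
  exact: contra (round_preserves_models round_G0 a_ps) (IH r0_false).
Qed.

Lemma run_top_assignment (psis : seq cnf) (G : form) (r : bool) :
  run psis G r -> r = true -> exists m, forall psi, psi \in psis ->
    satisfiable (FAnd (cnf_form psi) (assign_form (shared_vars psis) m)).
Proof.
elim=> [// | G0 m G1 _ round_G0 _ | G0 m G1 r0 _ _ _ IH /IH //].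
by exists m; apply: round_all_satisfiable round_G0 _.
Qed.

Theorem mainTheorem2 (phi : cnf) (psis : seq cnf) :
  decomposition phi psis ->
  (run psis FTop true -> satisfiable (cnf_form phi)) /\
  (run psis FTop false -> ~ satisfiable (cnf_form phi)).
Proof.
move=> dec; split.
- move=> /run_top_assignment [] // m /glue_models [a a_ps].
  by exists a; rewrite (decomposition_eval _ dec); apply/allP.
- move=> run_bot [a a_phi].
  have a_ps : forall psi, psi \in psis -> eval a (cnf_form psi).
    by apply/allP; rewrite -(decomposition_eval _ dec).
  by move/negP: (run_bot_no_model run_bot erefl a_ps).
Qed.
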